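(* Consider Configuration III (two agents in mutual beacon-referenced pursuit, each referencing its own beacon, with $b>0$) with parameters $\mu>0$, $\lambda\in(0,1)$, $a\in[-1,1]$ and $a_0=0$. A circling equilibrium exists if and only if $a<0$, and at a circling equilibrium the shape variables satisfy $$\bar x_1=\bar x_2=0,\ \bar x_{1b1}=\bar x_{2b2}=0,\ \hat x_1=\hat x_2=0,\ \tilde x=-1,\ \rho=\frac{2}{(1-\lambda)\mu(-a)},\ \hat r_1=\hat r_2,\ \rho_{1b1}^2-\rho_{2b2}^2-2\hat r_1=0.$$
   Context: Two-agent setup: beacons $\mathbf r_{b1}=(0,0,-b)$, $\mathbf r_{b2}=(0,0,b)$ with $b\ge0$, $\hat{\mathbf b}=\mathbf r_{b2}-\mathbf r_{b1}=(0,0,2b)$. Agents $i=1,2$ have positions $\mathbf r_i\in\mathbb R^3$ and unit velocities $\mathbf x_i$. Let $\mathbf r=\mathbf r_1-\mathbf r_2$, $\mathbf r_{1b1}=\mathbf r_1-\mathbf r_{b1}$, $\mathbf r_{2b2}=\mathbf r_2-\mathbf r_{b2}$, $\rho=|\mathbf r|$, $\rho_{1b1}=|\mathbf r_{1b1}|$, $\rho_{2b2}=|\mathbf r_{2b2}|$, $\bar x_1=\mathbf x_1\cdot\mathbf r/\rho$, $\bar x_2=-\mathbf x_2\cdot\mathbf r/\rho$, $\bar x_{1b1}=\mathbf x_1\cdot\mathbf r_{1b1}/\rho_{1b1}$, $\bar x_{2b2}=\mathbf x_2\cdot\mathbf r_{2b2}/\rho_{2b2}$, $\tilde x=\mathbf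 x_1\cdot\mathbf x_2$, $\hat r_i=\mathbf r_i\cdot\hat{\mathbf b}$, $\hat x_i=\mathbf x_i\cdot\hat{\mathbf b}$. With gain $\mu>0$, weight $\lambda\in(0,1)$, common agent-bearing parameter $a\in[-1,1]$ and common beacon-bearing parameter $a_0\in[-1,1]$, the closed-loop dynamics are $\dot{\mathbf r}_i=\mathbf x_i$ and $$\dot{\mathbf x}_1=-(1-\lambda)\mu(\bar x_1-a)\Bigl(\tfrac{\mathbf r}{\rho}-\bar x_1\mathbf x_1\Bigr)-\lambda\mu(\bar x_{1b1}-a_0)\Bigl(\tfrac{\mathbf r_{1b1}}{\rho_{1b1}}-\bar x_{1b1}\mathbf x_1\Bigr),$$ $$\dot{\mathbf x}_2=-(1-\lambda)\mu(\bar x_2-a)\Bigl(-\tfrac{\mathbf r}{\rho}-\bar x_2\mathbf x_2\Bigr)-\lambda\mu(\bar x_{2b2}-a_0)\Bigl(\tfrac{\mathbf r_{2b2}}{\rho_{2b2}}-\bar x_{2b2}\mathbf x_2\Bigr).$$ The shape variables $(\bar x_1,\bar x_2,\bar x_{1b1},\bar x_{2b2},\tilde x,\rho,\rho_{1b1},\rho_{2b2},\hat r_1,\hat r_2,\hat x_1,\hat x_2)$ have time derivatives along this flow that depend only on the shape variables. A circling equilibrium is a state with $\rho,\rho_{1b1},\rho_{2b2}>0$ at which the time derivatives of all shape variables vanish. Configuration III is the case $b>0$ (two distinct beacons). *)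

From Stdlib Require Import Reals.
Open Scope R_scope.

Record vec3 := V3 { vx : R; vy : R; vz : R }.

Definition vadd (u v : vec3) : vec3 := V3 (vx u + vx v) (vy u + vy v) (vz u + vz v).
Definition vsub (u v : vec3) : vec3 := V3 (vx u - vx v) (vy u - vy v) (vz u - vz v).
Definition vscale (c : R) (v : vec3) : vec3 := V3 (c * vx v) (c * vy v) (c * vz v).
Definition dot (u v : vec3) : R := vx u * vx v + vy u * vy v + vz u * vz v.
Definition vnorm (v : vec3) : R := sqrt (dot v v).

Definition rb1 (b : R) : vec3 := V3 0 0 (- b).
Definition rb2 (b : R) : vec3 := V3 0 0 b.
Definition bhat (b : R) : vec3 := vsub (rb2 b) (rb1 b).

Definition rrel (r1 r2 : vec3) : vec3 := vsub r1 r2.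
Definition r1b1 (b : R) (r1 : vec3) : vec3 := vsub r1 (rb1 b).
Definition r2b2 (b : R) (r2 : vec3) : vec3 := vsub r2 (rb2 b).
Definition rho (r1 r2 : vec3) : R := vnorm (rrel r1 r2).
Definition rho1b1 (b : R) (r1 : vec3) : R := vnorm (r1b1 b r1).
Definition rho2b2 (b : R) (r2 : vec3) : R := vnorm (r2b2 b r2).

Definition xbar1 (r1 r2 x1 : vec3) : R := dot x1 (rrel r1 r2) / rho r1 r2.
Definition xbar2 (r1 r2 x2 : vec3) : R := - (dot x2 (rrel r1 r2) / rho r1 r2).
Definition xbar1b1 (b : R) (r1 x1 : vec3) : R := dot x1 (r1b1 b r1) / rho1b1 b r1.
Definition xbar2b2 (b : R) (r2 x2 : vec3) : R := dot x2 (r2b2 b r2) / rho2b2 b r2.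
Definition xtilde (x1 x2 : vec3) : R := dot x1 x2.
Definition rhat (b : R) (ri : vec3) : R := dot ri (bhat b).
Definition xhat (b : R) (xi : vec3) : R := dot xi (bhat b).

(* Closed-loop vector field: dr_i/dt = x_i and the following dx_i/dt. *)
Definition x1dot (mu lam a a0 b : R) (r1 r2 x1 : vec3) : vec3 :=
  let r := rrel r1 r2 in
  let p := rho r1 r2 in
  let q := r1b1 b r1 in
  let pq := rho1b1 b r1 in
  let xb := xbar1 r1 r2 x1 in
  let xbb := xbar1b1 b r1 x1 in
  vadd (vscale (- (1 - lam) * mu * (xb - a)) (vsub (vscale (/ p) r) (vscale xb x1)))
       (vscale (- lam * mu * (xbb - a0)) (vsub (vscale (/ pq) q) (vscale xbb x1))).

Definition x2dot (mu lam a a0 b : R) (r1 r2 x2 : vec3) : vec3 :=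
  let r := rrel r1 r2 in
  let p := rho r1 r2 in
  let q := r2b2 b r2 in
  let pq := rho2b2 b r2 in
  let xb := xbar2 r1 r2 x2 in
  let xbb := xbar2b2 b r2 x2 in
  vadd (vscale (- (1 - lam) * mu * (xb - a)) (vsub (vscale (- / p) r) (vscale xb x2)))
       (vscale (- lam * mu * (xbb - a0)) (vsub (vscale (/ pq) q) (vscale xbb x2))).

(* Time derivatives of the shape variables along the flow at the state
   (r1, r2, x1, x2), obtained by the chain rule with dr_i/dt = x_i,
   dx_i/dt = x1dot / x2dot. *)
(* All derivatives take the full state and parameters (uniform signature). *)
Definition d_rho (mu lam a a0 b : R) (r1 r2 x1 x2 : vec3) : R :=
  dot (rrel r1 r2) (vsub x1 x2) / rho r1 r2.
Definition d_rho1b1 (mu lam a a0 b : R) (r1 r2 x1 x2 : vec3) : R :=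
  dot (r1b1 b r1) x1 / rho1b1 b r1.
Definition d_rho2b2 (mu lam a a0 b : R) (r1 r2 x1 x2 : vec3) : R :=
  dot (r2b2 b r2) x2 / rho2b2 b r2.
Definition d_xbar1 (mu lam a a0 b : R) (r1 r2 x1 x2 : vec3) : R :=
  let p := rho r1 r2 in
  dot (x1dot mu lam a a0 b r1 r2 x1) (rrel r1 r2) / p
  + dot x1 (vsub x1 x2) / p
  - dot x1 (rrel r1 r2) * d_rho mu lam a a0 b r1 r2 x1 x2 / (p * p).
Definition d_xbar2 (mu lam a a0 b : R) (r1 r2 x1 x2 : vec3) : R :=
  let p := rho r1 r2 in
  - (dot (x2dot mu lam a a0 b r1 r2 x2) (rrel r1 r2) / p
     + dot x2 (vsub x1 x2) / p
     - dot x2 (rrel r1 r2) * d_rho mu lam a a0 b r1 r2 x1 x2 / (p * p)).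
Definition d_xbar1b1 (mu lam a a0 b : R) (r1 r2 x1 x2 : vec3) : R :=
  let p1 := rho1b1 b r1 in
  dot (x1dot mu lam a a0 b r1 r2 x1) (r1b1 b r1) / p1
  + dot x1 x1 / p1
  - dot x1 (r1b1 b r1) * d_rho1b1 mu lam a a0 b r1 r2 x1 x2 / (p1 * p1).
Definition d_xbar2b2 (mu lam a a0 b : R) (r1 r2 x1 x2 : vec3) : R :=
  let p2 := rho2b2 b r2 in
  dot (x2dot mu lam a a0 b r1 r2 x2) (r2b2 b r2) / p2
  + dot x2 x2 / p2
  - dot x2 (r2b2 b r2) * d_rho2b2 mu lam a a0 b r1 r2 x1 x2 / (p2 * p2).
Definition d_xtilde (mu lam a a0 b : R) (r1 r2 x1 x2 : vec3) : R :=
  dot (x1dot mu lam a a0 b r1 r2 x1) x2 + dot x1 (x2dot mu lam a a0 b r1 r2 x2).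
Definition d_rhat1 (mu lam a a0 b : R) (r1 r2 x1 x2 : vec3) : R := dot x1 (bhat b).
Definition d_rhat2 (mu lam a a0 b : R) (r1 r2 x1 x2 : vec3) : R := dot x2 (bhat b).
Definition d_xhat1 (mu lam a a0 b : R) (r1 r2 x1 x2 : vec3) : R :=
  dot (x1dot mu lam a a0 b r1 r2 x1) (bhat b).
Definition d_xhat2 (mu lam a a0 b : R) (r1 r2 x1 x2 : vec3) : R :=
  dot (x2dot mu lam a a0 b r1 r2 x2) (bhat b).

Definition circling_equilibrium (mu lam a a0 b : R) (r1 r2 x1 x2 : vec3) : Prop :=
  vnorm x1 = 1 /\ vnorm x2 = 1 /\
  0 < rho r1 r2 /\ 0 < rho1b1 b r1 /\ 0 < rho2b2 b r2 /\
  d_xbar1 mu lam a a0 b r1 r2 x1 x2 = 0 /\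
  d_xbar2 mu lam a a0 b r1 r2 x1 x2 = 0 /\
  d_xbar1b1 mu lam a a0 b r1 r2 x1 x2 = 0 /\
  d_xbar2b2 mu lam a a0 b r1 r2 x1 x2 = 0 /\
  d_xtilde mu lam a a0 b r1 r2 x1 x2 = 0 /\
  d_rho mu lam a a0 b r1 r2 x1 x2 = 0 /\
  d_rho1b1 mu lam a a0 b r1 r2 x1 x2 = 0 /\
  d_rho2b2 mu lam a a0 b r1 r2 x1 x2 = 0 /\
  d_rhat1 mu lam a a0 b r1 r2 x1 x2 = 0 /\
  d_rhat2 mu lam a a0 b r1 r2 x1 x2 = 0 /\
  d_xhat1 mu lam a a0 b r1 r2 x1 x2 = 0 /\
  d_xhat2 mu lam a a0 b r1 r2 x1 x2 = 0.

(** At an equilibrium the distances [rho], [rho1b1], [rho2b2] are constant, so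
    [xbar1b1 = xbar2b2 = 0] and [xbar2 = - xbar1 =: - s]; with [a0 = 0] the
    beacon term of the control then vanishes.  Writing [k = (1 - lam) mu], the
    equations [d xbar1 = d xbar2 = 0] become
      [k (s - a) rho (1 - s^2) = 1 - xtilde]  and  [k (s + a) rho (1 - s^2) = xtilde - 1],
    so [s (1 - s^2) = 0].  If [s^2 = 1] then [x1] is parallel to [r], hence
    orthogonal to [r1b1], contradicting the radial equation
    [k (s - a) (r . r1b1) = rho] coming from [d xbar1b1 = 0].  So [s = 0], and
    the radial equations of both agents together with [r1b1 = r2b2 + r + bhat]
    and [r . bhat = 0] give [k a rho = -2]. *)

From Stdlib Require Import Reals Lra Psatz.
Open Scope R_scope.

Lemma dot_comm u v : dot u v = dot v u.
Proof. destruct u, v; unfold dot; simpl; ring. Qed.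

Lemma dot_vadd_l u v w : dot (vadd u v) w = dot u w + dot v w.
Proof. destruct u, v, w; unfold dot, vadd; simpl; ring. Qed.

Lemma dot_vsub_l u v w : dot (vsub u v) w = dot u w - dot v w.
Proof. destruct u, v, w; unfold dot, vsub; simpl; ring. Qed.

Lemma dot_vsub_r u v w : dot w (vsub u v) = dot w u - dot w v.
Proof. destruct u, v, w; unfold dot, vsub; simpl; ring. Qed.

Lemma dot_vscale_l c u w : dot (vscale c u) w = c * dot u w.
Proof. destruct u, w; unfold dot, vscale; simpl; ring. Qed.

Lemma dot_self_ge0 u : 0 <= dot u u.
Proof. destruct u; unfold dot; simpl; nra. Qed.

Lemma dot_self_eq0 u w : dot u u = 0 -> dot u w = 0.
Proof.
  destruct u as [u1 u2 u3], w; unfold dot; simpl; intro H.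
  assert (u1 = 0) by nra; assert (u2 = 0) by nra; assert (u3 = 0) by nra.
  subst; ring.
Qed.

Lemma dot_vsub_vscale_self x y c :
  dot (vsub x (vscale c y)) (vsub x (vscale c y)) = dot x x - 2 * c * dot x y + c ^ 2 * dot y y.
Proof. destruct x, y; unfold dot, vsub, vscale; simpl; ring. Qed.

Lemma vnorm_sq v : vnorm v ^ 2 = dot v v.
Proof. apply pow2_sqrt, dot_self_ge0. Qed.

Lemma vnorm_eq1 v : vnorm v = 1 -> dot v v = 1.
Proof. intro H; rewrite <- vnorm_sq, H; ring. Qed.

Lemma div_eq0 n p : p <> 0 -> n / p = 0 -> n = 0.
Proof. intros Hp H; replace n with (n / p * p) by (field; auto); rewrite H; ring. Qed.

(* Cauchy-Schwarz with equality: a unit vector making a bearing [s = +-1] with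
   [r] is [s r / |r|]. *)
Lemma unit_vector_aligned x r w p s :
  dot x x = 1 -> dot r r = p ^ 2 -> p <> 0 -> dot x r = s * p -> s ^ 2 = 1 ->
  dot x w = s / p * dot r w.
Proof.
  intros Hx Hr Hp Hxr Hs.
  assert (Hzero : dot (vsub x (vscale (s / p) r)) (vsub x (vscale (s / p) r)) = 0).
  { rewrite dot_vsub_vscale_self, Hx, Hr, Hxr, <- Hs.
    field; auto. }
  apply (dot_self_eq0 _ w) in Hzero.
  rewrite dot_vsub_l, dot_vscale_l in Hzero; lra.
Qed.

Lemma r1b1_decompose b r1 r2 w :
  dot (r1b1 b r1) w = dot (r2b2 b r2) w + dot (rrel r1 r2) w + dot (bhat b) w.
Proof. destruct r1, r2, w; unfold dot, r1b1, r2b2, rrel, bhat, rb1, rb2, vsub; simpl; ring. Qed.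

Lemma rhat_sub b r1 r2 : rhat b r1 - rhat b r2 = dot (rrel r1 r2) (bhat b).
Proof. destruct r1, r2; unfold rhat, dot, rrel, bhat, rb1, rb2, vsub; simpl; ring. Qed.

Lemma rho_beacons_sq_sub b r1 r2 :
  rho1b1 b r1 ^ 2 - rho2b2 b r2 ^ 2 - 2 * rhat b r1 =
  dot (rrel r1 r2) (r1b1 b r1) + dot (rrel r1 r2) (r2b2 b r2) - dot (rrel r1 r2) (bhat b).
Proof.
  unfold rho1b1, rho2b2; rewrite !vnorm_sq.
  destruct r1, r2; unfold rhat, dot, r1b1, r2b2, rrel, bhat, rb1, rb2, vsub; simpl; ring.
Qed.

Lemma dot_rrel_self r1 r2 : dot (rrel r1 r2) (rrel r1 r2) = rho r1 r2 ^ 2.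
Proof. unfold rho; rewrite vnorm_sq; reflexivity. Qed.

Lemma dot_rrel_xbar1 r1 r2 x1 : 0 < rho r1 r2 -> dot x1 (rrel r1 r2) = xbar1 r1 r2 x1 * rho r1 r2.
Proof. intro Hp; unfold xbar1; field; lra. Qed.

Lemma dot_rrel_xbar2 r1 r2 x2 : 0 < rho r1 r2 -> dot x2 (rrel r1 r2) = - xbar2 r1 r2 x2 * rho r1 r2.
Proof. intro Hp; unfold xbar2; field; lra. Qed.

Lemma dot_r1b1_xbar1b1 b r1 x1 : 0 < rho1b1 b r1 -> dot x1 (r1b1 b r1) = xbar1b1 b r1 x1 * rho1b1 b r1.
Proof. intro Hp; unfold xbar1b1; field; lra. Qed.

Lemma dot_r2b2_xbar2b2 b r2 x2 : 0 < rho2b2 b r2 -> dot x2 (r2b2 b r2) = xbar2b2 b r2 x2 * rho2b2 b r2.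
Proof. intro Hp; unfold xbar2b2; field; lra. Qed.

Lemma d_rho_xbar mu lam a a0 b r1 r2 x1 x2 :
  d_rho mu lam a a0 b r1 r2 x1 x2 = xbar1 r1 r2 x1 + xbar2 r1 r2 x2.
Proof. unfold d_rho, xbar1, xbar2; rewrite dot_vsub_r, !(dot_comm (rrel r1 r2)); unfold Rdiv; ring. Qed.

Lemma d_rho1b1_xbar1b1 mu lam a a0 b r1 r2 x1 x2 :
  d_rho1b1 mu lam a a0 b r1 r2 x1 x2 = xbar1b1 b r1 x1.
Proof. unfold d_rho1b1, xbar1b1; rewrite dot_comm; reflexivity. Qed.

Lemma d_rho2b2_xbar2b2 mu lam a a0 b r1 r2 x1 x2 :
  d_rho2b2 mu lam a a0 b r1 r2 x1 x2 = xbar2b2 b r2 x2.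
Proof. unfold d_rho2b2, xbar2b2; rewrite dot_comm; reflexivity. Qed.

Lemma dot_x1dot_at_setpoint mu lam a a0 b r1 r2 x1 w :
  xbar1b1 b r1 x1 = a0 ->
  dot (x1dot mu lam a a0 b r1 r2 x1) w =
  - ((1 - lam) * mu) * (xbar1 r1 r2 x1 - a)
    * (dot (rrel r1 r2) w / rho r1 r2 - xbar1 r1 r2 x1 * dot x1 w).
Proof.
  intro Hset; unfold x1dot; cbv zeta; rewrite Hset.
  rewrite dot_vadd_l, !dot_vscale_l, !dot_vsub_l, !dot_vscale_l.
  unfold rrel; rewrite dot_vsub_l; unfold Rdiv; ring.
Qed.

Lemma dot_x2dot_at_setpoint mu lam a a0 b r1 r2 x2 w :
  xbar2b2 b r2 x2 = a0 ->
  dot (x2dot mu lam a a0 b r1 r2 x2) w =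
  - ((1 - lam) * mu) * (xbar2 r1 r2 x2 - a)
    * (- (dot (rrel r1 r2) w / rho r1 r2) - xbar2 r1 r2 x2 * dot x2 w).
Proof.
  intro Hset; unfold x2dot; cbv zeta; rewrite Hset.
  rewrite dot_vadd_l, !dot_vscale_l, !dot_vsub_l, !dot_vscale_l.
  unfold rrel; rewrite dot_vsub_l; unfold Rdiv; ring.
Qed.

Section Equilibrium.

Variables (mu lam a b : R) (r1 r2 x1 x2 : vec3).
Hypothesis gain_pos : 0 < (1 - lam) * mu.
Hypothesis Heq : circling_equilibrium mu lam a 0 b r1 r2 x1 x2.

Let k := (1 - lam) * mu.
Let s := xbar1 r1 r2 x1.
Let X1 := dot (rrel r1 r2) (r1b1 b r1).
Let X2 := dot (rrel r1 r2) (r2b2 b r2).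

Ltac equilibrium_component := unfold circling_equilibrium in Heq; tauto.

Let unit1 : dot x1 x1 = 1.
Proof. apply vnorm_eq1; equilibrium_component. Qed.
Let unit2 : dot x2 x2 = 1.
Proof. apply vnorm_eq1; equilibrium_component. Qed.
Let p_pos : 0 < rho r1 r2.
Proof. equilibrium_component. Qed.
Let p1_pos : 0 < rho1b1 b r1.
Proof. equilibrium_component. Qed.
Let p2_pos : 0 < rho2b2 b r2.
Proof. equilibrium_component. Qed.
Let D_xbar1 : d_xbar1 mu lam a 0 b r1 r2 x1 x2 = 0.
Proof. equilibrium_component. Qed.
Let D_xbar2 : d_xbar2 mu lam a 0 b r1 r2 x1 x2 = 0.
Proof. equilibrium_component. Qed.
Let D_xbar1b1 : d_xbar1b1 mu lam a 0 b r1 r2 x1 x2 = 0.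
Proof. equilibrium_component. Qed.
Let D_xbar2b2 : d_xbar2b2 mu lam a 0 b r1 r2 x1 x2 = 0.
Proof. equilibrium_component. Qed.
Let D_rho : d_rho mu lam a 0 b r1 r2 x1 x2 = 0.
Proof. equilibrium_component. Qed.
Let D_xhat1 : d_xhat1 mu lam a 0 b r1 r2 x1 x2 = 0.
Proof. equilibrium_component. Qed.

Lemma equilibrium_xbar1b1 : xbar1b1 b r1 x1 = 0.
Proof. rewrite <- (d_rho1b1_xbar1b1 mu lam a 0 b r1 r2 x1 x2); equilibrium_component. Qed.

Lemma equilibrium_xbar2b2 : xbar2b2 b r2 x2 = 0.
Proof. rewrite <- (d_rho2b2_xbar2b2 mu lam a 0 b r1 r2 x1 x2); equilibrium_component. Qed.

Lemma equilibrium_xbar2 : xbar2 r1 r2 x2 = - s.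
Proof. assert (H := D_rho); rewrite d_rho_xbar in H; unfold s; lra. Qed.

Lemma equilibrium_xhat1 : xhat b x1 = 0.
Proof. equilibrium_component. Qed.

Lemma equilibrium_xhat2 : xhat b x2 = 0.
Proof. equilibrium_component. Qed.

Lemma radial_equation1 : k * (s - a) * X1 = rho r1 r2.
Proof.
  assert (D := D_xbar1b1); unfold d_xbar1b1 in D.
  rewrite (dot_x1dot_at_setpoint _ _ _ _ _ _ _ _ _ equilibrium_xbar1b1),
    d_rho1b1_xbar1b1, (dot_r1b1_xbar1b1 b r1 x1 p1_pos), equilibrium_xbar1b1, unit1 in D.
  assert (N : (rho r1 r2 - k * (s - a) * X1) / (rho r1 r2 * rho1b1 b r1) = 0).
  { rewrite <- D; unfold k, s, X1; field; split; lra. }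
  apply div_eq0 in N; [lra | nra].
Qed.

Lemma radial_equation2 : k * (s + a) * X2 = rho r1 r2.
Proof.
  assert (D := D_xbar2b2); unfold d_xbar2b2 in D.
  rewrite (dot_x2dot_at_setpoint _ _ _ _ _ _ _ _ _ equilibrium_xbar2b2),
    d_rho2b2_xbar2b2, (dot_r2b2_xbar2b2 b r2 x2 p2_pos), equilibrium_xbar2b2, unit2,
    equilibrium_xbar2 in D.
  assert (N : (rho r1 r2 - k * (s + a) * X2) / (rho r1 r2 * rho2b2 b r2) = 0).
  { rewrite <- D; unfold k, s, X2; field; split; lra. }
  apply div_eq0 in N; [lra | nra].
Qed.

Lemma equilibrium_rrel_bhat : dot (rrel r1 r2) (bhat b) = 0.
Proof.
  assert (D := D_xhat1); unfold d_xhat1 in D.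
  rewrite (dot_x1dot_at_setpoint _ _ _ _ _ _ _ _ _ equilibrium_xbar1b1) in D.
  change (dot x1 (bhat b)) with (xhat b x1) in D; rewrite equilibrium_xhat1 in D.
  assert (Hks : k * (s - a) <> 0).
  { intro E; assert (H := radial_equation1); rewrite E in H; lra. }
  assert (N : - (k * (s - a)) * (dot (rrel r1 r2) (bhat b) / rho r1 r2) = 0).
  { rewrite <- D; unfold k, s; ring. }
  apply Rmult_integral in N as [N | N]; [lra |].
  apply div_eq0 in N; lra.
Qed.

Lemma bearing_equation1 : k * (s - a) * rho r1 r2 * (1 - s ^ 2) = 1 - xtilde x1 x2.
Proof.
  assert (D := D_xbar1); unfold d_xbar1 in D.
  rewrite (dot_x1dot_at_setpoint _ _ _ _ _ _ _ _ _ equilibrium_xbar1b1), D_rho,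
    (dot_vsub_r x1 x2 x1), unit1, dot_rrel_self, (dot_rrel_xbar1 _ _ _ p_pos) in D.
  assert (N : (1 - xtilde x1 x2 - k * (s - a) * rho r1 r2 * (1 - s ^ 2)) / rho r1 r2 = 0).
  { rewrite <- D; unfold k, s, xtilde; field; lra. }
  apply div_eq0 in N; lra.
Qed.

Lemma bearing_equation2 : k * (s + a) * rho r1 r2 * (1 - s ^ 2) = xtilde x1 x2 - 1.
Proof.
  assert (D := D_xbar2); unfold d_xbar2 in D.
  rewrite (dot_x2dot_at_setpoint _ _ _ _ _ _ _ _ _ equilibrium_xbar2b2), D_rho,
    (dot_vsub_r x1 x2 x2), unit2, dot_rrel_self, (dot_rrel_xbar2 _ _ _ p_pos), equilibrium_xbar2,
    (dot_comm x2 x1) in D.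
  assert (N : (k * (s + a) * rho r1 r2 * (1 - s ^ 2) - (xtilde x1 x2 - 1)) / rho r1 r2 = 0).
  { rewrite <- D; unfold k, s, xtilde; field; lra. }
  apply div_eq0 in N; lra.
Qed.

Lemma equilibrium_xbar1 : s = 0.
Proof.
  assert (H : k * s * rho r1 r2 * (1 - s ^ 2) = 0).
  { apply (Rmult_eq_reg_l 2); [| lra].
    transitivity ((1 - xtilde x1 x2) + (xtilde x1 x2 - 1)); [| ring].
    rewrite <- bearing_equation1, <- bearing_equation2; ring. }
  destruct (Req_dec s 0) as [| Hs]; [assumption | exfalso].
  apply Rmult_integral in H as [H | Hs2].
  { apply Rmult_integral in H as [H | H]; [apply Rmult_integral in H as [H | H] |];
      unfold k in *; lra. }
  (* [s^2 = 1]: [x1] is parallel to [r], so [r] is orthogonal to [r1b1]. *)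
  assert (Hx1 := unit_vector_aligned x1 (rrel r1 r2) (r1b1 b r1) (rho r1 r2) s unit1
                   (dot_rrel_self r1 r2) ltac:(lra) (dot_rrel_xbar1 _ _ _ p_pos) ltac:(lra)).
  rewrite (dot_r1b1_xbar1b1 b r1 x1 p1_pos), equilibrium_xbar1b1 in Hx1.
  assert (HX1 : X1 = 0).
  { apply (Rmult_eq_reg_l (s / rho r1 r2)).
    - unfold X1; lra.
    - unfold Rdiv; apply Rmult_integral_contrapositive_currified; [assumption |].
      apply Rinv_neq_0_compat; lra. }
  assert (H := radial_equation1); rewrite HX1 in H; lra.
Qed.

Lemma equilibrium_gain_relation : k * a * rho r1 r2 = -2.
Proof.
  assert (HX : X1 = X2 + rho r1 r2 ^ 2).
  { unfold X1, X2; rewrite !(dot_comm (rrel r1 r2)), (r1b1_decompose b r1 r2),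
      dot_rrel_self, (dot_comm (bhat b)), equilibrium_rrel_bhat; ring. }
  assert (R1 := radial_equation1); assert (R2 := radial_equation2).
  rewrite equilibrium_xbar1 in R1, R2.
  apply (Rmult_eq_reg_r (rho r1 r2)); nra.
Qed.

Lemma equilibrium_shape :
  a < 0 /\
  xbar1 r1 r2 x1 = 0 /\ xbar2 r1 r2 x2 = 0 /\
  xbar1b1 b r1 x1 = 0 /\ xbar2b2 b r2 x2 = 0 /\
  xhat b x1 = 0 /\ xhat b x2 = 0 /\
  xtilde x1 x2 = -1 /\
  rho r1 r2 = 2 / ((1 - lam) * mu * (- a)) /\
  rhat b r1 = rhat b r2 /\
  (rho1b1 b r1) ^ 2 - (rho2b2 b r2) ^ 2 - 2 * rhat b r1 = 0.
Proof.
  assert (Hgain := equilibrium_gain_relation).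
  assert (Hkp : 0 < k * rho r1 r2) by (apply Rmult_lt_0_compat; assumption).
  assert (Ha : a < 0) by nra.
  assert (Hs := equilibrium_xbar1).
  assert (B1 := bearing_equation1); assert (R1 := radial_equation1); assert (R2 := radial_equation2).
  rewrite Hs in B1, R1, R2.
  repeat split; auto using equilibrium_xbar1b1, equilibrium_xbar2b2,
                          equilibrium_xhat1, equilibrium_xhat2.
  - rewrite equilibrium_xbar2, Hs; ring.
  - nra.
  - unfold k in Hgain; field_simplify_eq; nra.
  - assert (G := rhat_sub b r1 r2); rewrite equilibrium_rrel_bhat in G; lra.
  - rewrite rho_beacons_sq_sub, equilibrium_rrel_bhat; fold X1 X2.
    assert (k * a * (X1 + X2) = 0) by nra.
    unfold k in *; nra.
Qed.

End Equilibrium.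

(* The agents sit at the ends of a horizontal segment of length
   [p = 2 / ((1 - lam) mu (-a))] centred between the beacons and move in
   opposite horizontal directions orthogonal to it. *)
Lemma circling_equilibrium_exists mu lam a b :
  0 < (1 - lam) * mu -> a < 0 ->
  exists r1 r2 x1 x2 : vec3, circling_equilibrium mu lam a 0 b r1 r2 x1 x2.
Proof.
  intros Hk Ha.
  set (p := 2 / ((1 - lam) * mu * (- a))).
  assert (Hp : 0 < p) by (apply Rdiv_lt_0_compat; nra).
  exists (V3 (p / 2) 0 0), (V3 (- (p / 2)) 0 0), (V3 0 1 0), (V3 0 (-1) 0).
  assert (Hrho : rho (V3 (p / 2) 0 0) (V3 (- (p / 2)) 0 0) = p).
  { unfold rho, vnorm, rrel, vsub, dot; simpl.
    transitivity (sqrt (p ^ 2)); [f_equal; field | apply sqrt_pow2; lra]. }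
  assert (Hp1 : 0 < rho1b1 b (V3 (p / 2) 0 0)).
  { unfold rho1b1, vnorm, r1b1, vsub, dot, rb1; simpl; apply sqrt_lt_R0; nra. }
  assert (Hp2 : 0 < rho2b2 b (V3 (- (p / 2)) 0 0)).
  { unfold rho2b2, vnorm, r2b2, vsub, dot, rb2; simpl; apply sqrt_lt_R0; nra. }
  unfold circling_equilibrium, d_xbar1, d_xbar2, d_xbar1b1, d_xbar2b2, d_xtilde,
    d_rho, d_rho1b1, d_rho2b2, d_rhat1, d_rhat2, d_xhat1, d_xhat2,
    x1dot, x2dot, xbar1, xbar2, xbar1b1, xbar2b2.
  cbv zeta; rewrite Hrho.
  set (p1 := rho1b1 b (V3 (p / 2) 0 0)) in *.
  set (p2 := rho2b2 b (V3 (- (p / 2)) 0 0)) in *.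
  unfold vnorm, dot, vadd, vsub, vscale, rrel, r1b1, r2b2, bhat, rb1, rb2; simpl.
  repeat split; try lra.
  all: try (replace (0 * 0 + 1 * 1 + 0 * 0) with 1 by ring; apply sqrt_1).
  all: try (replace (0 * 0 + -1 * -1 + 0 * 0) with 1 by ring; apply sqrt_1).
  all: unfold p; field; repeat split; nra.
Qed.

Theorem proposition5p2 (mu lam a b : R) :
  0 < mu -> 0 < lam < 1 -> -1 <= a <= 1 -> 0 < b ->
  ((exists r1 r2 x1 x2 : vec3, circling_equilibrium mu lam a 0 b r1 r2 x1 x2) <-> a < 0)
  /\
  (forall r1 r2 x1 x2 : vec3, circling_equilibrium mu lam a 0 b r1 r2 x1 x2 ->
     xbar1 r1 r2 x1 = 0 /\ xbar2 r1 r2 x2 = 0 /\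
     xbar1b1 b r1 x1 = 0 /\ xbar2b2 b r2 x2 = 0 /\
     xhat b x1 = 0 /\ xhat b x2 = 0 /\
     xtilde x1 x2 = -1 /\
     rho r1 r2 = 2 / ((1 - lam) * mu * (- a)) /\
     rhat b r1 = rhat b r2 /\
     (rho1b1 b r1) ^ 2 - (rho2b2 b r2) ^ 2 - 2 * rhat b r1 = 0).
Proof.
  intros Hmu Hlam _ _.
  assert (Hk : 0 < (1 - lam) * mu) by nra.
  split; [split|].
  - intros (r1 & r2 & x1 & x2 & H).
    exact (proj1 (equilibrium_shape mu lam a b r1 r2 x1 x2 Hk H)).
  - exact (circling_equilibrium_exists mu lam a b Hk).
  - intros r1 r2 x1 x2 H.
    exact (proj2 (equilibrium_shape mu lam a b r1 r2 x1 x2 Hk H)).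
Qed.
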